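(* In the binary noisy-label setting described in the context, if $e_+,e_-<0.5$, then for all $y,y'\in\{-1,+1\}$, $$\left|\frac{\tilde P(y,y')}{\tilde Q(y,y')}-1\right|=O\big(1-e_+-e_-\big).$$
   Context: $(X,Y)$ with $X\in\mathcal X$, $Y\in\{-1,+1\}$; noisy label $\tilde Y$ generated from $Y$, conditionally independently of $X$ given $Y$, with $e_+={\mathbb P}(\tilde Y=-1\mid Y=+1)$, $e_-={\mathbb P}(\tilde Y=+1\mid Y=-1)$, $e_++e_-<1$. $h:\mathcal X\to\{-1,+1\}$ is a classifier, $\tilde P(y,y')={\mathbb P}(h(X)=y,\tilde Y=y')$ and $\tilde Q(y,y')={\mathbb P}(h(X)=y)\,{\mathbb P}(\tilde Y=y')$. The $O(\cdot)$ is with respect to the noise rates $e_+,e_-$, with $h$ and the distribution of $(X,Y)$ fixed. *)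

(* Labels: true = +1, false = -1. *)
From HB Require Import structures.
From mathcomp Require Import all_boot all_order all_algebra.
From mathcomp Require Import all_classical all_reals all_analysis.
Set Implicit Arguments. Unset Strict Implicit. Unset Printing Implicit Defensive.
Import Order.TTheory GRing.Theory Num.Theory.
Local Open Scope classical_set_scope.
Local Open Scope ring_scope.

Section NoisyDefs.
Context {R : realType} {d : measure_display} {Omega : measurableType d}.

Definition pr (P : probability Omega R) (A : set Omega) : R := fine (P A).

(* noise transition P(Ytilde = y' | Y = t), with
   e_+ = P(Ytilde=-1 | Y=+1), e_- = P(Ytilde=+1 | Y=-1) *)
Definition noise (ep em : R) (t y' : bool) : R :=
  if t then (if y' then 1 - ep else ep) else (if y' then em else 1 - em).

(* Ptilde(y,y') = P(h(X)=y, Ytilde=y'); since Ytilde is generated from Y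
   conditionally independently of X given Y, this is
   sum_t P(h(X)=y, Y=t) * P(Ytilde=y' | Y=t). *)
Definition Ptilde (P : probability Omega R) {T : Type} (X : Omega -> T)
  (Y : Omega -> bool) (h : T -> bool) (ep em : R) (y y' : bool) : R :=
  \sum_(t : bool) pr P [set w | h (X w) = y /\ Y w = t] * noise ep em t y'.

Definition Pnoisy (P : probability Omega R) (Y : Omega -> bool)
  (ep em : R) (y' : bool) : R :=
  \sum_(t : bool) pr P [set w | Y w = t] * noise ep em t y'.

Definition Qtilde (P : probability Omega R) {T : Type} (X : Omega -> T)
  (Y : Omega -> bool) (h : T -> bool) (ep em : R) (y y' : bool) : R :=
  pr P [set w | h (X w) = y] * Pnoisy P Y ep em y'.

End NoisyDefs.

From HB Require Import structures.
From mathcomp Require Import all_boot all_order all_algebra.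
From mathcomp Require Import all_classical all_reals all_analysis.
From mathcomp Require Import ring lra.
Set Implicit Arguments. Unset Strict Implicit. Unset Printing Implicit Defensive.
Import Order.TTheory GRing.Theory Num.Theory.
Local Open Scope classical_set_scope.
Local Open Scope ring_scope.

(* Write a_t = P(h(X) = y, Y = t), p_t = P(Y = t) and b = a_+ + a_- = P(h(X) = y).
   Both Ptilde(y, y') and Qtilde(y, y') are linear in the noise matrix, and
   their difference is +-(a_+ - b p_+)(1 - e_+ - e_-): the noise rates only
   enter through the determinant of the noise matrix.  Since e_+, e_- < 1/2,
   Qtilde(y, y') >= b p_y' / 2, so the relative error is at most
   2 |a_+ - b p_+| / (b p_y') * (1 - e_+ - e_-). *)

Section PrTheory.
Context {R : realType} {d : measure_display} {Omega : measurableType d}.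
Variable P : probability Omega R.

Lemma pr_ge0 (A : set Omega) : 0 <= pr P A.
Proof. exact/fine_ge0/measure_ge0. Qed.

Lemma pr_setT : pr P setT = 1.
Proof. by rewrite /pr probability_setT. Qed.

Lemma le_pr (A B : set Omega) : measurable A -> measurable B -> A `<=` B ->
  pr P A <= pr P B.
Proof.
move=> mA mB AB; apply: fine_le; rewrite ?fin_num_measure //.
by apply: le_measure; rewrite ?inE.
Qed.

Lemma pr_bool_partition (Y : Omega -> bool) (A : set Omega) :
  measurable A -> (forall t, measurable [set w | Y w = t]) ->
  pr P A = \sum_(t : bool) pr P (A `&` [set w | Y w = t]).
Proof.
move=> mA mY; have mAY t : measurable (A `&` [set w | Y w = t]).
  exact: measurableI.
rewrite big_bool /= /pr -fineD ?fin_num_measure // -measureU //; last first.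
  by apply/seteqP; split=> w //= [[_ ->] [_]].
rewrite -setIUr; congr (fine (P _)); apply/seteqP; split=> [w Aw | w []//].
by split=> //=; case: (Y w); [left | right].
Qed.

End PrTheory.

Section NoisyMass.
Variables (R : realType) (ep em : R).

(* Ptilde(y, y') is the noisy mass of t |-> P(h(X) = y, Y = t), and
   Pnoisy(y') that of t |-> P(Y = t). *)
Definition noisy_mass (w : bool -> R) (y' : bool) : R :=
  \sum_(t : bool) w t * noise ep em t y'.

Definition label_cov (a p : bool -> R) : R := a true - (a true + a false) * p true.

Lemma noisy_mass_sub_cov (a p : bool -> R) (y' : bool) : p true + p false = 1 ->
  noisy_mass a y' - (a true + a false) * noisy_mass p y'
    = (-1) ^+ (~~ y') * label_cov a p * (1 - ep - em).
Proof.
move=> p1; rewrite /noisy_mass /label_cov !big_bool /=.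
have -> : p false = 1 - p true by lra.
by case: y' => /=; ring.
Qed.

Lemma label_cov_eq0 (a p : bool -> R) (y' : bool) :
  (forall t, 0 <= a t <= p t) -> p true + p false = 1 -> p y' = 0 ->
  label_cov a p = 0.
Proof.
move=> ap p1 p0; have := ap true; have := ap false; rewrite /label_cov.
by case: y' p0 => p0; rewrite p0 in p1 *; nra.
Qed.

(* the diagonal noise entries [1 - ep] and [1 - em] exceed 1/2 *)
Lemma noisy_mass_ge_half (p : bool -> R) (y' : bool) :
  0 <= ep -> ep < 1 / 2 -> 0 <= em -> em < 1 / 2 -> (forall t, 0 <= p t) ->
  p y' / 2 <= noisy_mass p y'.
Proof.
move=> ? ? ? ? p0; have := p0 true; have := p0 false.
by rewrite /noisy_mass /noise big_bool; case: y' => /= *; nra.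
Qed.

Lemma noisy_ratio_bound (a p : bool -> R) (y' : bool) :
  0 <= ep -> ep < 1 / 2 -> 0 <= em -> em < 1 / 2 ->
  (forall t, 0 <= a t <= p t) -> p true + p false = 1 ->
  (a true + a false) * noisy_mass p y' != 0 ->
  `|noisy_mass a y' / ((a true + a false) * noisy_mass p y') - 1|
    <= 2 * `|label_cov a p| / ((a true + a false) * p y') * (1 - ep - em).
Proof.
move=> ep0 ep1 em0 em1 ap p1 Q0.
set b := a true + a false; set Q := b * _ in Q0 *.
have a_ge0 t : 0 <= a t by case/andP: (ap t).
have p_ge0 t : 0 <= p t by case/andP: (ap t) => /le_trans; apply.
have b_ge0 : 0 <= b by rewrite addr_ge0.
have Q_ge : b * p y' / 2 <= Q.
  by rewrite /Q -mulrA ler_wpM2l // noisy_mass_ge_half.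
have Q_gt0 : 0 < Q by rewrite lt0r Q0 (le_trans _ Q_ge) ?mulr_ge0.
have s_ge0 : 0 <= 1 - ep - em by lra.
have -> : noisy_mass a y' / Q - 1 = (noisy_mass a y' - Q) / Q.
  by rewrite mulrBl divff.
rewrite noisy_mass_sub_cov // normrM normfV (gtr0_norm Q_gt0) !normrM.
rewrite normrX normrN1 expr1n mul1r (ger0_norm s_ge0).
(* if p y' = 0 the constant is 0 (division by 0), but then so is the covariance *)
have [py0 | py_neq0] := eqVneq (p y') 0.
  by rewrite (label_cov_eq0 ap p1 py0) normr0 !(mul0r, mulr0).
have bp_gt0 : 0 < b * p y'.
  have b_neq0 : b != 0 by apply: contraNneq Q0; rewrite /Q => ->; rewrite mul0r.
  by rewrite mulr_gt0 // lt0r ?b_neq0 ?py_neq0 ?p_ge0.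
rewrite ler_pdivrMr //.
have -> : 2 * `|label_cov a p| / (b * p y') * (1 - ep - em) * Q
    = `|label_cov a p| * (1 - ep - em) * (2 * Q / (b * p y')) by ring.
by rewrite ler_peMr ?mulr_ge0 // ler_pdivlMr // mul1r; lra.
Qed.

End NoisyMass.

Theorem proposition1 (R : realType) (d : measure_display) (Omega : measurableType d)
  (P : probability Omega R) (T : Type) (X : Omega -> T) (Y : Omega -> bool)
  (h : T -> bool)
  (hmeas : forall y t : bool, measurable [set w | h (X w) = y /\ Y w = t])
  (hmeasX : forall y : bool, measurable [set w | h (X w) = y])
  (hmeasY : forall t : bool, measurable [set w | Y w = t]) :
  forall y y' : bool, exists C : R,
    forall ep em : R, 0 <= ep -> ep < 1 / 2 -> 0 <= em -> em < 1 / 2 ->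
      Qtilde P X Y h ep em y y' != 0 ->
      `| Ptilde P X Y h ep em y y' / Qtilde P X Y h ep em y y' - 1 |
        <= C * (1 - ep - em).
Proof.
move=> y y'.
pose a t := pr P [set w | h (X w) = y /\ Y w = t].
pose p t := pr P [set w | Y w = t].
have p1 : p true + p false = 1.
  by rewrite -(pr_setT P) (pr_bool_partition P measurableT hmeasY) big_bool /= !setTI.
have hb : pr P [set w | h (X w) = y] = a true + a false.
  by rewrite (pr_bool_partition P (hmeasX y) hmeasY) big_bool.
have ap t : 0 <= a t <= p t by rewrite pr_ge0 le_pr // => w [].
exists (2 * `|label_cov a p| / ((a true + a false) * p y')).
move=> ep em ep0 ep1 em0 em1; rewrite /Qtilde hb => Q0.
exact: noisy_ratio_bound.
Qed.
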